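(* Let $S$ be a nilpotent right loop with central series $\{1\}=\mathcal Z_0\le\mathcal Z_1\le\cdots\le\mathcal Z_n=S$. For $0\le j\le n-1$ let $\theta_j:G_S\to G_{S/\mathcal Z_j}$ be the surjective homomorphism $f^S(y,z)\mapsto f^{S/\mathcal Z_j}(\mathcal Z_j\circ y,\mathcal Z_j\circ z)$ induced by the natural projection. Then $\{1\}=\ker\theta_0\le\ker\theta_1\le\cdots\le\ker\theta_{n-1}=G_S$, and for each $j$ the group $\ker\theta_{j+1}/\ker\theta_j$ is isomorphic to a subgroup of $\prod_{\mathcal B}\mathcal Z_{j+1}/\mathcal Z_j$ for some index set $\mathcal B$.
   Context: A right loop is a set $S$ with binary operation $\circ$ and two-sided identity $1$ such that each equation $X\circ a=b$ has a unique solution. For $y,z\in S$, $f^S(y,z):S\to S$ sends $x$ to the unique $X$ with $X\circ(y\circ z)=(x\circ y)\circ z$; $G_S\le\mathrm{Sym}(S)$ is generated by all $f^S(y,z)$. A congruence is an equivalence relation which is a right subloop of $S\times S$; an invariant right subloop is the class $T$ of $1$ under a congruence, $S/T=\{T\circ x\}$ with $(T\circ x)\circ(T\circ y)=T\circ(x\circ y)$. For congruences $\beta,\gamma$, $\gamma$ centralizes $\beta$ if there is a congruence $(\gamma|\beta)$ on the right loop $\beta\subseteq S\times S$ with: (i) $(x,y)(\gamma|\beta)(u,v)\Rightarrow x\gamma u$; (ii) for $(x,y)\in\beta$, $(u,v)\mapsto u$ is a bijection from the $(\gamma|\beta)$-class of $(x,y)$ to the $\gamma$-class of $x$; (iii)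 $(x,y)\in\gamma\Rightarrow(x,x)(\gamma|\beta)(y,y)$; (iv) $(x,y)(\gamma|\beta)(u,v)\Rightarrow(y,x)(\gamma|\beta)(v,u)$; (v) $(x,y)(\gamma|\beta)(u,v)$, $(y,z)(\gamma|\beta)(v,w)\Rightarrow(x,z)(\gamma|\beta)(u,w)$. The center $\mathcal Z(S)$ is the class of $1$ under the unique maximal congruence centralized by $S\times S$; it is an abelian group. $S$ is nilpotent if the series $\mathcal Z_0=\{1\}$, $\mathcal Z_1=\mathcal Z(S)$, $\mathcal Z_{i+1}/\mathcal Z_i=\mathcal Z(S/\mathcal Z_i)$ (each $\mathcal Z_i$ an invariant right subloop) reaches $\mathcal Z_n=S$. *)

From Stdlib Require Import Arith ClassicalEpsilon.
Set Implicit Arguments.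

Section RightLoops.
Variable S : Type.
Variable op : S -> S -> S.
Variable e : S.

Definition is_right_loop : Prop :=
  (forall x, op e x = x) /\ (forall x, op x e = x) /\
  (forall a b, exists! X, op X a = b).

Definition is_f (y z : S) (f : S -> S) : Prop :=
  forall x, op (f x) (op y z) = op (op x y) z.

Definition f_gen (f : S -> S) : Prop := exists y z, is_f y z f.
End RightLoops.

Inductive gen_group (A : Type) (gens : (A -> A) -> Prop) : (A -> A) -> Prop :=
| gg_id : gen_group gens (fun x => x)
| gg_gen : forall f, gens f -> gen_group gens f
| gg_inv : forall f g, gens f -> (forall x, f (g x) = x) -> (forall x, g (f x) = x) ->
           gen_group gens g
| gg_comp : forall f g, gen_group gens f -> gen_group gens g ->
            gen_group gens (fun x => f (g x)).

Definition G_of (S : Type) (op : S -> S -> S) : (S -> S) -> Prop :=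
  gen_group (f_gen op).

(** A congruence relative to a carrier predicate P (a right subloop of the
    ambient right loop): an equivalence relation on P which, viewed as a subset
    of P x P, is closed under the componentwise operation, contains the
    identity pair (by reflexivity), and is closed under right division. *)
Definition congr_on (A : Type) (op : A -> A -> A) (P : A -> Prop)
  (R : A -> A -> Prop) : Prop :=
  (forall a b, R a b -> P a /\ P b) /\
  (forall a, P a -> R a a) /\
  (forall a b, R a b -> R b a) /\
  (forall a b c, R a b -> R b c -> R a c) /\
  (forall a a' b b', R a a' -> R b b' -> R (op a b) (op a' b')) /\
  (forall a a' b b' X X', P X -> P X' -> R a a' -> R b b' ->
      op X a = b -> op X' a' = b' -> R X X').

Definition congruence (A : Type) (op : A -> A -> A) (R : A -> A -> Prop) : Prop :=
  congr_on op (fun _ => True) R.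

Definition pair_op (A : Type) (op : A -> A -> A) (p q : A * A) : A * A :=
  (op (fst p) (fst q), op (snd p) (snd q)).

Definition centralizes (A : Type) (op : A -> A -> A)
  (gamma beta : A -> A -> Prop) : Prop :=
  exists C : A * A -> A * A -> Prop,
    congr_on (pair_op op) (fun p => beta (fst p) (snd p)) C /\
    (forall x y u v, C (x, y) (u, v) -> gamma x u) /\
    (forall x y, beta x y ->
       (forall u, gamma x u -> exists v, C (x, y) (u, v)) /\
       (forall u v v', C (x, y) (u, v) -> C (x, y) (u, v') -> v = v')) /\
    (forall x y, gamma x y -> C (x, x) (y, y)) /\
    (forall x y u v, C (x, y) (u, v) -> C (y, x) (v, u)) /\
    (forall x y z u v w, C (x, y) (u, v) -> C (y, z) (v, w) -> C (x, z) (u, w)).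

Definition fullrel (A : Type) : A -> A -> Prop := fun _ _ => True.

Definition center (A : Type) (op : A -> A -> A) (e : A) : A -> Prop :=
  fun x => exists zeta : A -> A -> Prop,
    congruence op zeta /\ centralizes op (@fullrel A) zeta /\
    (forall zeta', congruence op zeta' -> centralizes op (@fullrel A) zeta' ->
       forall a b, zeta' a b -> zeta a b) /\
    zeta e x.

Section Quotient.
Variable S : Type.
Variable op : S -> S -> S.
Variable T : S -> Prop.

Definition coset (x : S) : S -> Prop := fun y => exists t, T t /\ y = op t x.

Definition quot : Type := { P : S -> Prop | exists x, P = coset x }.

Definition qclass (x : S) : quot := exist _ (coset x) (ex_intro _ x eq_refl).

Definition qrep (P : quot) : S := proj1_sig (constructive_indefinite_description _ (proj2_sig P)).

Definition qop (P Q : quot) : quot := qclass (op (qrep P) (qrep Q)).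
End Quotient.
Arguments qop {S} op T P Q.
Arguments qrep {S op T} P.
Arguments qclass {S} op T x.

Fixpoint Zser (S : Type) (op : S -> S -> S) (e : S) (i : nat) : S -> Prop :=
  match i with
  | O => fun x => x = e
  | Datatypes.S m =>
      fun x => center (qop op (Zser op e m)) (qclass op (Zser op e m) e)
                      (qclass op (Zser op e m) x)
  end.

Definition nilpotent (S : Type) (op : S -> S -> S) (e : S) : Prop :=
  exists n, forall x, Zser op e n x.

(** theta_j(g) : the permutation of S/Z_j induced by g (T∘x |-> T∘(g x));
    on generators this is f^S(y,z) |-> f^{S/Z_j}(Z_j∘y, Z_j∘z). *)
Definition theta (S : Type) (op : S -> S -> S) (e : S) (j : nat) (g : S -> S)
  : quot op (Zser op e j) -> quot op (Zser op e j) :=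
  fun P => qclass op (Zser op e j) (g (qrep P)).

Arguments theta {S} op e j g P.

Definition ker_theta (S : Type) (op : S -> S -> S) (e : S) (j : nat) (g : S -> S) : Prop :=
  G_of op g /\ forall P, theta op e j g P = P.

Arguments ker_theta {S} op e j g.
Arguments Zser {S} op e i x.
Arguments G_of {S} op _.

From Stdlib Require Import Arith Lia ClassicalEpsilon FunctionalExtensionality
  PropExtensionality ProofIrrelevance.

(** In a right loop, the center [Z(S)] is exactly the set of
    elements that are central in the elementary sense: they commute with
    everything and associate in each position ([center_iff_central]).  The
    maximal congruence centralized by [S × S] is "differing by a central
    factor", centralized through "having the same central ratio".  It follows
    that every [Z_j] is an invariant right subloop and that [Z_{j+1}] is the
    preimage of the central elements of [S/Z_j] ([Zser_congruence],
    [Zser_succ_iff]).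

    [G_S] consists of permutations that respect every congruence and commute
    with left multiplication by central elements; it is trivial when every
    element is central.  The map [θ_j] sends [G_S] into [G_{S/Z_j}] and
    [g ∈ ker θ_j] iff [g] fixes every [Z_j]-class.  This gives [ker θ_0 = 1],
    monotonicity, and [ker θ_{n-1} = G_S] (as [S/Z_{n-1}] is central).
    Finally, for [g ∈ ker θ_{j+1}] write [g(b) = t_b∘b] with [t_b ∈ Z_{j+1}];
    [g ↦ (Z_j∘t_b)_b] is a homomorphism [ker θ_{j+1} → ∏_{b∈S} Z_{j+1}/Z_j]
    whose fibres are the cosets of [ker θ_j] ([kernel_quotient_embeds]). *)


Definition central {L : Type} (op : L -> L -> L) (a : L) : Prop :=
  forall x y, op a x = op x a /\ op (op a x) y = op a (op x y) /\
    op (op x a) y = op x (op a y) /\ op (op x y) a = op x (op y a).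

Definition central_rel {L : Type} (op : L -> L -> L) (x y : L) : Prop :=
  exists a b, central op a /\ central op b /\ op a x = op b y.

Definition central_pair_rel {L : Type} (op : L -> L -> L) (p q : L * L) : Prop :=
  exists a b, central op a /\ central op b /\
    op a (snd p) = op b (fst p) /\ op a (snd q) = op b (fst q).

Section RightLoop.
Context {L : Type} {op : L -> L -> L} {e : L} (HL : is_right_loop op e).

Lemma loop_lid x : op e x = x.
Proof. apply HL. Qed.

Lemma loop_rid x : op x e = x.
Proof. apply HL. Qed.

Lemma loop_rcancel u v a : op u a = op v a -> u = v.
Proof.
  intro H. destruct HL as [_ [_ Hdiv]]. destruct (Hdiv a (op u a)) as [X [_ HX]].
  rewrite <- (HX u eq_refl), <- (HX v (eq_sym H)). reflexivity.
Qed.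

Lemma loop_rdiv a b : exists X, op X a = b.
Proof. destruct HL as [_ [_ Hdiv]]. destruct (Hdiv a b) as [X [HX _]]; eauto. Qed.

Lemma central_comm {a} (Ha : central op a) x : op a x = op x a.
Proof. apply (Ha x x). Qed.

Lemma central_assoc_l {a} (Ha : central op a) x y : op (op a x) y = op a (op x y).
Proof. apply (Ha x y). Qed.

Lemma central_assoc_m {a} (Ha : central op a) x y : op (op x a) y = op x (op a y).
Proof. apply (Ha x y). Qed.

Lemma central_assoc_r {a} (Ha : central op a) x y : op (op x y) a = op x (op y a).
Proof. apply (Ha x y). Qed.

Lemma central_e : central op e.
Proof. intros x y. rewrite !loop_lid, !loop_rid. repeat split. Qed.

Lemma central_op a b : central op a -> central op b -> central op (op a b).
Proof.
  intros Ha Hb x y. repeat split.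
  - rewrite (central_assoc_l Ha), (central_comm Hb x), (central_comm Ha (op x b)),
      (central_assoc_r Ha), <- (central_comm Ha b). reflexivity.
  - rewrite (central_assoc_l Ha), (central_assoc_l Ha), (central_assoc_l Hb),
      (central_assoc_l Ha). reflexivity.
  - rewrite <- (central_assoc_r Hb), (central_assoc_m Hb), (central_assoc_m Ha),
      (central_assoc_l Ha). reflexivity.
  - rewrite <- (central_assoc_r Hb (op x y)), (central_assoc_r Ha),
      (central_assoc_r Hb x), (central_assoc_r Hb y). reflexivity.
Qed.

Lemma central_inv a a' : central op a -> op a' a = e -> central op a'.
Proof.
  intros Ha Hinv.
  assert (cancel_l : forall x, op (op a' x) a = x).
  { intro x. rewrite (central_assoc_r Ha), <- (central_comm Ha x),
      <- (central_assoc_m Ha), Hinv, loop_lid. reflexivity. }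
  assert (cancel_r : forall x, op (op x a') a = x).
  { intro x. rewrite (central_assoc_r Ha), Hinv, loop_rid. reflexivity. }
  intros x y. repeat split; apply (loop_rcancel _ _ a).
  - rewrite cancel_l, cancel_r. reflexivity.
  - rewrite cancel_l, (central_assoc_r Ha), <- (central_comm Ha y),
      <- (central_assoc_m Ha), cancel_l. reflexivity.
  - rewrite (central_assoc_r Ha x), cancel_l, (central_assoc_r Ha),
      <- (central_comm Ha y), <- (central_assoc_m Ha), cancel_r. reflexivity.
  - rewrite cancel_r, (central_assoc_r Ha x), cancel_r. reflexivity.
Qed.

Lemma central_interchange a c x y : central op a -> central op c ->
  op (op a c) (op x y) = op (op a x) (op c y).
Proof.
  intros Ha Hc. rewrite (central_assoc_l Ha), <- (central_assoc_l Hc), (central_comm Hc x),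
    (central_assoc_m Hc), <- (central_assoc_l Ha). reflexivity.
Qed.

Lemma central_swap a c w : central op a -> central op c -> op a (op c w) = op c (op a w).
Proof.
  intros Ha Hc. rewrite <- (central_assoc_l Ha), (central_comm Ha c), (central_assoc_l Hc).
  reflexivity.
Qed.

Lemma central_lcancel c u v : central op c -> op c u = op c v -> u = v.
Proof.
  intros Hc H. apply (loop_rcancel _ _ c).
  rewrite <- (central_comm Hc u), <- (central_comm Hc v). exact H.
Qed.

Lemma central_rel_iff x y : central_rel op x y <-> exists t, central op t /\ y = op t x.
Proof.
  split.
  - intros [a [b [Ha [Hb H]]]]. destruct (loop_rdiv b e) as [b' Hb'].
    pose proof (central_inv b b' Hb Hb') as Hb'c.
    exists (op b' a). split; [apply central_op; assumption|].
    rewrite (central_assoc_l Hb'c), H, <- (central_assoc_l Hb'c), Hb', loop_lid.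
    reflexivity.
  - intros [t [Ht ->]]. exists t, e. refine (conj Ht (conj central_e _)).
    rewrite loop_lid. reflexivity.
Qed.

Lemma central_rdiv a b c d X1 X2 p1 p2 q1 q2 :
  central op a -> central op b -> central op c -> central op d ->
  op a p2 = op b p1 -> op c q2 = op d q1 -> op X1 p1 = q1 -> op X2 p2 = q2 ->
  op (op c b) X2 = op (op d a) X1.
Proof.
  intros Ha Hb Hc Hd Hp Hq E1 E2. apply (loop_rcancel _ _ (op a p2)).
  pose proof (central_op c b Hc Hb) as Hcb. pose proof (central_op d a Hd Ha) as Hda.
  transitivity (op b (op a (op d q1))).
  - rewrite <- (central_interchange _ _ _ _ Hcb Ha), E2, (central_assoc_l Hcb),
      (central_assoc_l Hc), (central_swap c b _ Hc Hb), (central_swap c a _ Hc Ha), Hq.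
    reflexivity.
  - rewrite Hp, <- (central_interchange _ _ _ _ Hda Hb), E1, (central_assoc_l Hda),
      (central_assoc_l Hd), (central_swap d a _ Hd Ha), (central_swap d b _ Hd Hb),
      (central_swap a b _ Ha Hb). reflexivity.
Qed.

Lemma central_rel_congruence : congruence op (central_rel op).
Proof.
  unfold congruence, congr_on, central_rel.
  split; [|split; [|split; [|split; [|split]]]].
  - split; exact I.
  - intros x _. exists e, e. exact (conj central_e (conj central_e eq_refl)).
  - intros x y [a [b [Ha [Hb H]]]]. exists b, a. auto.
  - intros x y z [a [b [Ha [Hb H]]]] [c [d [Hc [Hd H']]]].
    exists (op c a), (op b d).
    refine (conj (central_op _ _ Hc Ha) (conj (central_op _ _ Hb Hd) _)).
    rewrite (central_assoc_l Hc), H, (central_swap c b _ Hc Hb), H',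
      <- (central_assoc_l Hb). reflexivity.
  - intros x x' y y' [a [b [Ha [Hb H]]]] [c [d [Hc [Hd H']]]].
    exists (op a c), (op b d).
    refine (conj (central_op _ _ Ha Hc) (conj (central_op _ _ Hb Hd) _)).
    rewrite (central_interchange a c x y Ha Hc), H, H', (central_interchange b d x' y' Hb Hd).
    reflexivity.
  - intros x x' y y' X X' _ _ [a [b [Ha [Hb H]]]] [c [d [Hc [Hd H']]]] E E'.
    exists (op c b), (op d a).
    refine (conj (central_op _ _ Hc Hb) (conj (central_op _ _ Hd Ha) _)).
    exact (central_rdiv a b c d X' X x' x y' y Ha Hb Hc Hd H H' E' E).
Qed.

Lemma central_pair_rel_congruence :
  congr_on (pair_op op) (fun p => central_rel op (fst p) (snd p)) (central_pair_rel op).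
Proof.
  unfold congr_on, central_pair_rel, central_rel.
  split; [|split; [|split; [|split; [|split]]]].
  - intros [x y] [u v] [a [b [Ha [Hb [H1 H2]]]]]; simpl in *.
    split; exists b, a; refine (conj Hb (conj Ha (eq_sym _))); assumption.
  - intros [x y] [a [b [Ha [Hb H]]]]; simpl in *.
    exists b, a. exact (conj Hb (conj Ha (conj (eq_sym H) (eq_sym H)))).
  - intros [x y] [u v] [a [b [Ha [Hb [H1 H2]]]]]; simpl in *.
    exists a, b. exact (conj Ha (conj Hb (conj H2 H1))).
  - intros [x y] [u v] [s t] [a [b [Ha [Hb [H1 H2]]]]] [c [d [Hc [Hd [H3 H4]]]]];
      simpl in *.
    exists a, b. refine (conj Ha (conj Hb (conj H1 _))).
    assert (Hratio : op a d = op c b).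
    { apply (loop_rcancel _ _ u). rewrite (central_assoc_l Ha), <- H3, (central_assoc_l Hc),
        <- H2, (central_swap a c v Ha Hc). reflexivity. }
    apply (central_lcancel c); [exact Hc|].
    rewrite (central_swap c a t Hc Ha), H4, <- (central_assoc_l Ha), Hratio,
      (central_assoc_l Hc). reflexivity.
  - intros [x1 x2] [y1 y2] [u1 u2] [v1 v2]
      [a [b [Ha [Hb [H1 H2]]]]] [c [d [Hc [Hd [H3 H4]]]]]; simpl in *.
    exists (op a c), (op b d).
    refine (conj (central_op _ _ Ha Hc) (conj (central_op _ _ Hb Hd) (conj _ _))).
    + rewrite (central_interchange a c x2 u2 Ha Hc), H1, H3,
        (central_interchange b d x1 u1 Hb Hd). reflexivity.
    + rewrite (central_interchange a c y2 v2 Ha Hc), H2, H4,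
        (central_interchange b d y1 v1 Hb Hd). reflexivity.
  - intros [p1 p2] [p1' p2'] [q1 q2] [q1' q2'] [X1 X2] [X1' X2'] _ _
      [a [b [Ha [Hb [H1 H2]]]]] [c [d [Hc [Hd [H3 H4]]]]] E E'; simpl in *.
    unfold pair_op in E, E'; simpl in E, E'.
    injection E as E1 E2. injection E' as E1' E2'.
    exists (op c b), (op d a).
    refine (conj (central_op _ _ Hc Hb) (conj (central_op _ _ Hd Ha) (conj _ _))).
    + exact (central_rdiv a b c d X1 X2 p1 p2 q1 q2 Ha Hb Hc Hd H1 H3 E1 E2).
    + exact (central_rdiv a b c d X1' X2' p1' p2' q1' q2' Ha Hb Hc Hd H2 H4 E1' E2').
Qed.

Lemma central_rel_centralized : centralizes op (@fullrel L) (central_rel op).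
Proof.
  exists (central_pair_rel op).
  pose proof central_pair_rel_congruence as HC.
  destruct HC as [_ [_ [Csym [Ctrans _]]]].
  split; [exact central_pair_rel_congruence|].
  split; [|split; [|split; [|split]]].
  - intros; exact I.
  - intros x y [a [b [Ha [Hb H]]]]. split.
    + intros u _. destruct (loop_rdiv b (op a u)) as [v Hv]. exists v, b, a.
      refine (conj Hb (conj Ha (conj _ _))); simpl; [exact (eq_sym H)|].
      rewrite (central_comm Hb v). exact Hv.
    + intros u v v' C1 C2.
      destruct (Ctrans _ _ _ (Csym _ _ C1) C2) as [a' [b' [Ha' [_ [K1 K2]]]]]; simpl in *.
      apply (central_lcancel a'); [exact Ha'|]. congruence.
  - intros x y _. exists e, e. exact (conj central_e (conj central_e (conj eq_refl eq_refl))).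
  - intros x y u v [a [b [Ha [Hb [H1 H2]]]]]; simpl in *.
    exists b, a. exact (conj Hb (conj Ha (conj (eq_sym H1) (eq_sym H2)))).
  - intros x y z u v w [a [b [Ha [Hb [H1 H2]]]]] [c [d [Hc [Hd [H3 H4]]]]]; simpl in *.
    exists (op c a), (op d b).
    refine (conj (central_op _ _ Hc Ha) (conj (central_op _ _ Hd Hb) (conj _ _))); simpl.
    + rewrite (central_assoc_l Hc), (central_swap c a z Hc Ha), H3,
        (central_swap a d y Ha Hd), H1, <- (central_assoc_l Hd). reflexivity.
    + rewrite (central_assoc_l Hc), (central_swap c a w Hc Ha), H4,
        (central_swap a d v Ha Hd), H2, <- (central_assoc_l Hd). reflexivity.
Qed.

(** The [(ζ|L×L)]-class of [(e, a)] contains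
    [(w, w∘a)] and [(w, a∘w)] for all [w]; uniqueness in (ii) turns these
    pairs into the commutation and association laws of [a]. *)
Lemma centralized_class_central (zeta : L -> L -> Prop) a :
  congruence op zeta -> centralizes op (@fullrel L) zeta -> zeta e a -> central op a.
Proof.
  intros Hz Hc Hea.
  destruct Hz as [_ [zrefl _]].
  destruct Hc as [C [[_ [Crefl [Csym [Ctrans [Ccomp _]]]]] [_ [Cii [Ciii _]]]]].
  assert (Cea : C (e, a) (e, a)) by (apply Crefl; exact Hea).
  assert (Cdiag : forall x, C (x, x) (x, x)) by (intro x; apply Crefl, zrefl; exact I).
  assert (Cright : forall w, C (e, a) (w, op w a)).
  { intro w. apply Csym. pose proof (Ccomp _ _ _ _ (Ciii w e I) Cea) as H.
    unfold pair_op in H; simpl in H. rewrite loop_rid, !loop_lid in H. exact H. }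
  assert (Cleft : forall w, C (e, a) (w, op a w)).
  { intro w. apply Csym. pose proof (Ccomp _ _ _ _ Cea (Ciii w e I)) as H.
    unfold pair_op in H; simpl in H. rewrite loop_lid, !loop_rid in H. exact H. }
  assert (uniq : forall u v v', C (e, a) (u, v) -> C (e, a) (u, v') -> v = v')
    by (apply (proj2 (Cii e a Hea))).
  assert (comm : forall x, op a x = op x a) by (intro x; exact (uniq _ _ _ (Cleft x) (Cright x))).
  assert (assoc_r : forall x y, op (op x y) a = op x (op y a)).
  { intros x y. pose proof (Ccomp _ _ _ _ (Cdiag x) (Cright y)) as H.
    unfold pair_op in H; simpl in H. rewrite loop_rid in H.
    exact (uniq _ _ _ (Cright (op x y)) (Ctrans _ _ _ (Cright x) H)). }
  assert (assoc_l : forall x y, op (op a x) y = op a (op x y)).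
  { intros x y. pose proof (Ccomp _ _ _ _ (Cleft x) (Cdiag y)) as H.
    unfold pair_op in H; simpl in H. rewrite loop_lid in H.
    symmetry. exact (uniq _ _ _ (Cleft (op x y)) (Ctrans _ _ _ (Cleft y) H)). }
  assert (assoc_m : forall x y, op (op x a) y = op a (op x y)).
  { intros x y. pose proof (Ccomp _ _ _ _ (Csym _ _ (Cright x)) (Cdiag y)) as H.
    unfold pair_op in H; simpl in H. rewrite loop_lid in H.
    symmetry. exact (uniq _ _ _ (Cleft (op x y)) (Ctrans _ _ _ (Cleft y) (Csym _ _ H))). }
  intros x y. split; [|split; [|split]]; auto.
  rewrite assoc_m, (comm y), <- assoc_r, comm. reflexivity.
Qed.

(** The center of a right loop is exactly its set of central elements;
    [central_rel] is the maximal congruence centralized by [L × L]. *)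
Lemma center_iff_central x : center op e x <-> central op x.
Proof.
  split.
  - intros [zeta [Hc [Hcent [_ Hex]]]]. exact (centralized_class_central zeta x Hc Hcent Hex).
  - intro Hx. exists (central_rel op).
    split; [exact central_rel_congruence|]. split; [exact central_rel_centralized|]. split.
    + intros zeta Hz Hc a b Hab. destruct (loop_rdiv a b) as [t Ht].
      pose proof Hz as [_ [zrefl [_ [_ [_ zdiv]]]]].
      assert (Het : zeta e t) by exact (zdiv a a a b e t I I (zrefl a I) Hab (loop_lid a) Ht).
      exists t, e. refine (conj (centralized_class_central zeta t Hz Hc Het) (conj central_e _)).
      rewrite loop_lid. exact Ht.
    + exists x, e. refine (conj Hx (conj central_e _)). rewrite loop_rid, loop_lid. reflexivity.
Qed.
End RightLoop.

Section Quotient.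
Context {L : Type} (op : L -> L -> L) (T : L -> Prop).
Hypothesis HT : congruence op (coset op T).

Lemma qclass_eq_iff x y : qclass op T x = qclass op T y <-> coset op T x y.
Proof.
  destruct HT as [_ [crefl [csym [ctrans _]]]]. split.
  - intro H. apply (f_equal (@proj1_sig _ _)) in H. simpl in H. rewrite H.
    apply crefl; exact I.
  - intro H. apply eq_sig_hprop; [intros; apply proof_irrelevance|]. simpl.
    extensionality z. apply propositional_extensionality.
    split; intro Hz; eauto.
Qed.

Lemma qclass_qrep P : qclass op T (qrep P) = P.
Proof.
  unfold qrep, qclass. destruct (constructive_indefinite_description _ _) as [x Hx]; simpl.
  apply eq_sig_hprop; [intros; apply proof_irrelevance|]. simpl. symmetry. exact Hx.
Qed.

Lemma qclass_surj P : exists x, P = qclass op T x.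
Proof. exists (qrep P). symmetry; apply qclass_qrep. Qed.

Lemma qop_qclass x y : qop op T (qclass op T x) (qclass op T y) = qclass op T (op x y).
Proof.
  unfold qop. apply qclass_eq_iff. destruct HT as [_ [_ [_ [_ [ccomp _]]]]].
  apply ccomp; apply qclass_eq_iff, qclass_qrep.
Qed.

Lemma quotient_right_loop e : is_right_loop op e -> is_right_loop (qop op T) (qclass op T e).
Proof.
  intro HS. split; [|split].
  - intro P. destruct (qclass_surj P) as [x ->]. rewrite qop_qclass, (loop_lid HS). reflexivity.
  - intro P. destruct (qclass_surj P) as [x ->]. rewrite qop_qclass, (loop_rid HS). reflexivity.
  - intros A B. destruct (qclass_surj A) as [a ->]. destruct (qclass_surj B) as [b ->].
    destruct (loop_rdiv HS a b) as [X HX]. exists (qclass op T X). split.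
    + rewrite qop_qclass, HX. reflexivity.
    + intros Y HY. destruct (qclass_surj Y) as [y ->]. rewrite qop_qclass in HY.
      apply qclass_eq_iff. destruct HT as [_ [crefl [_ [_ [_ cdiv]]]]].
      apply (cdiv a a (op X a) (op y a) X y I I (crefl a I)); [|reflexivity|reflexivity].
      apply qclass_eq_iff. rewrite HX, HY. reflexivity.
Qed.
End Quotient.

Lemma congruence_pullback (A Q : Type) (op : A -> A -> A) (qo : Q -> Q -> Q) (q : A -> Q)
  (zeta : Q -> Q -> Prop) :
  (forall x y, qo (q x) (q y) = q (op x y)) -> congruence qo zeta ->
  congruence op (fun x y => zeta (q x) (q y)).
Proof.
  intros Hhom [_ [zrefl [zsym [ztrans [zcomp zdiv]]]]].
  split; [|split; [|split; [|split; [|split]]]].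
  - split; exact I.
  - intros a _. apply zrefl; exact I.
  - intros a b; apply zsym.
  - intros a b c; apply ztrans.
  - intros a a' b b' H1 H2. rewrite <- !Hhom. apply zcomp; assumption.
  - intros a a' b b' X X' _ _ H1 H2 E1 E2.
    apply (zdiv (q a) (q a') (q b) (q b')); try exact I; try assumption;
      rewrite Hhom; f_equal; assumption.
Qed.

Lemma congruence_ext (A : Type) (op : A -> A -> A) (R R' : A -> A -> Prop) :
  congruence op R -> (forall x y, R x y <-> R' x y) -> congruence op R'.
Proof.
  intros H E. replace R' with R; [exact H|].
  extensionality x; extensionality y; apply propositional_extensionality, E.
Qed.

Lemma eq_congruence (L : Type) (op : L -> L -> L) (e : L) :
  is_right_loop op e -> congruence op (@eq L).
Proof.
  intro HL. split; [|split; [|split; [|split; [|split]]]]; intros; subst; auto.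
  apply (loop_rcancel HL _ _ a'). congruence.
Qed.

Section CentralSeries.
Context {L : Type} {op : L -> L -> L} {e : L} (HS : is_right_loop op e).

Lemma coset_Zser0_iff x y : coset op (Zser op e 0) x y <-> y = x.
Proof.
  unfold coset; cbn [Zser]. split.
  - intros [t [-> ->]]. apply (loop_lid HS).
  - intros ->. exists e. rewrite (loop_lid HS). split; reflexivity.
Qed.

Lemma Zser_succ_iff j x : congruence op (coset op (Zser op e j)) ->
  Zser op e (S j) x <-> central (qop op (Zser op e j)) (qclass op (Zser op e j) x).
Proof.
  intro HT. cbn [Zser]. apply center_iff_central, quotient_right_loop; assumption.
Qed.

Lemma coset_Zser_succ_iff j x y : congruence op (coset op (Zser op e j)) ->
  coset op (Zser op e (S j)) x y <->
  central_rel (qop op (Zser op e j)) (qclass op (Zser op e j) x) (qclass op (Zser op e j) y).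
Proof.
  intro HT. pose proof (quotient_right_loop op _ HT e HS) as QL.
  rewrite (central_rel_iff QL). unfold coset. split.
  - intros [t [Ht ->]]. exists (qclass op (Zser op e j) t).
    split; [apply Zser_succ_iff; assumption|]. rewrite qop_qclass by exact HT. reflexivity.
  - intros [c [Hc Hy]]. destruct (qclass_surj op _ c) as [t' ->].
    destruct (loop_rdiv HS x y) as [t Ht]. exists t. split; [|symmetry; exact Ht].
    apply (Zser_succ_iff j t HT).
    replace (qclass op _ t) with (qclass op (Zser op e j) t'); [exact Hc|].
    apply (loop_rcancel QL _ _ (qclass op _ x)).
    rewrite <- Hy, qop_qclass, Ht by exact HT. reflexivity.
Qed.

Lemma Zser_congruence j : congruence op (coset op (Zser op e j)).
Proof.
  induction j as [|j IH].
  - apply (congruence_ext _ _ (@eq L)); [exact (eq_congruence _ _ _ HS)|].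
    intros x y. rewrite coset_Zser0_iff. split; intro; symmetry; assumption.
  - apply (congruence_ext _ _ (fun x y => central_rel (qop op (Zser op e j))
              (qclass op (Zser op e j) x) (qclass op (Zser op e j) y))).
    + apply (congruence_pullback _ _ op (qop op (Zser op e j)) (qclass op (Zser op e j))).
      * apply qop_qclass, IH.
      * exact (central_rel_congruence (quotient_right_loop op _ IH e HS)).
    + intros x y. symmetry. apply coset_Zser_succ_iff, IH.
Qed.

Lemma Zser_mono j x : Zser op e j x -> Zser op e (S j) x.
Proof.
  intro Hx. pose proof (Zser_congruence j) as HT.
  apply (Zser_succ_iff j x HT).
  replace (qclass op _ x) with (qclass op (Zser op e j) e).
  - exact (central_e (quotient_right_loop op _ HT e HS)).
  - apply qclass_eq_iff; [exact HT|]. exists x. rewrite (loop_rid HS). split; [exact Hx|reflexivity].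
Qed.
End CentralSeries.

Section PermutationGroup.
Context {L : Type} {op : L -> L -> L} {e : L} (HL : is_right_loop op e).

Lemma is_f_injective y z f : is_f op y z f -> forall u v, f u = f v -> u = v.
Proof.
  intros Hf u v H. apply (loop_rcancel HL _ _ y), (loop_rcancel HL _ _ z).
  rewrite <- !Hf, H. reflexivity.
Qed.

Lemma is_f_surjective y z f : is_f op y z f -> forall x, exists u, f u = x.
Proof.
  intros Hf x. destruct (loop_rdiv HL z (op x (op y z))) as [w Hw].
  destruct (loop_rdiv HL y w) as [u Hu]. exists u.
  apply (loop_rcancel HL _ _ (op y z)). rewrite Hf, Hu, Hw. reflexivity.
Qed.

Lemma G_inverse g : G_of op g ->
  exists g', G_of op g' /\ (forall x, g (g' x) = x) /\ (forall x, g' (g x) = x).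
Proof.
  intro Hg.
  induction Hg as [| f [y [z Hf]] | f g Hgen Hfg Hgf
                  | f g _ [f' [Hf' [Af Bf]]] _ [g' [Hg' [Ag Bg]]]].
  - exists (fun x => x). split; [constructor|split; reflexivity].
  - set (f' := fun x => proj1_sig (constructive_indefinite_description _
                                    (is_f_surjective y z f Hf x))).
    assert (Hff' : forall x, f (f' x) = x).
    { intro x. unfold f'. destruct (constructive_indefinite_description _ _); assumption. }
    assert (Hf'f : forall x, f' (f x) = x).
    { intro x. apply (is_f_injective y z f Hf). rewrite Hff'. reflexivity. }
    exists f'. split; [|split; assumption].
    apply (gg_inv _ f f'); [exists y, z; exact Hf|exact Hff'|exact Hf'f].
  - exists f. split; [apply gg_gen; exact Hgen|split; assumption].
  - exists (fun x => g' (f' x)). split; [apply gg_comp; assumption|split]; intro x.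
    + rewrite Ag, Af. reflexivity.
    + rewrite Bf, Bg. reflexivity.
Qed.

Lemma G_respects R g : congruence op R -> G_of op g -> forall x y, R x y -> R (g x) (g y).
Proof.
  intros [_ [Rrefl [_ [_ [Rcomp Rdiv]]]]] Hg.
  assert (Rdiv' : forall a b b' X X', R b b' -> op X a = b -> op X' a = b' -> R X X')
    by (intros a b b' X X' Hb E E'; exact (Rdiv a a b b' X X' I I (Rrefl a I) Hb E E')).
  induction Hg as [| f [y [z Hf]] | f g [y [z Hf]] Hfg _ | f g _ IHf _ IHg];
    intros x x' H.
  - exact H.
  - apply (Rdiv' (op y z) (op (op x y) z) (op (op x' y) z)); [|apply Hf|apply Hf].
    apply Rcomp; [apply Rcomp; [exact H|apply Rrefl; exact I]|apply Rrefl; exact I].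
  - assert (Hg : forall u, op (op (g u) y) z = op u (op y z))
      by (intro u; rewrite <- Hf, Hfg; reflexivity).
    apply (Rdiv' y (op (g x) y) (op (g x') y)); [|reflexivity|reflexivity].
    apply (Rdiv' z (op x (op y z)) (op x' (op y z))); [|apply Hg|apply Hg].
    apply Rcomp; [exact H|apply Rrefl; exact I].
  - apply IHf, IHg, H.
Qed.

Lemma G_central_shift g : G_of op g -> forall c x, central op c -> g (op c x) = op c (g x).
Proof.
  assert (generator_shift : forall y z f c x, is_f op y z f -> central op c ->
            f (op c x) = op c (f x)).
  { intros y z f c x Hf Hc. apply (loop_rcancel HL _ _ (op y z)).
    rewrite Hf, (central_assoc_l Hc), (central_assoc_l Hc), (central_assoc_l Hc), Hf.
    reflexivity. }
  intro Hg.
  induction Hg as [| f [y [z Hf]] | f g [y [z Hf]] Hfg Hgf | f g _ IHf _ IHg];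
    intros c x Hc.
  - reflexivity.
  - exact (generator_shift y z f c x Hf Hc).
  - apply (is_f_injective y z f Hf).
    rewrite (generator_shift y z f c (g x) Hf Hc), !Hfg. reflexivity.
  - rewrite IHg, IHf by exact Hc. reflexivity.
Qed.

Lemma G_trivial_on_central_loop g : (forall a, central op a) -> G_of op g -> forall x, g x = x.
Proof.
  intros Hcentral Hg.
  induction Hg as [| f [y [z Hf]] | f g [y [z Hf]] Hfg _ | f g _ IHf _ IHg]; intro x.
  - reflexivity.
  - apply (loop_rcancel HL _ _ (op y z)). rewrite Hf, (central_assoc_l (Hcentral x)).
    reflexivity.
  - apply (is_f_injective y z f Hf). rewrite Hfg. symmetry.
    apply (loop_rcancel HL _ _ (op y z)). rewrite Hf, (central_assoc_l (Hcentral x)).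
    reflexivity.
  - rewrite IHg, IHf. reflexivity.
Qed.
End PermutationGroup.

Section Theta.
Context {L : Type} {op : L -> L -> L} {e : L} (HL : is_right_loop op e).

Local Notation cls j := (qclass op (Zser op e j)).
Local Notation qopj j := (qop op (Zser op e j)).

Let quotient_loop j : is_right_loop (qopj j) (cls j e) :=
  quotient_right_loop op _ (Zser_congruence HL j) e HL.

Lemma theta_qclass j g x : G_of op g -> theta op e j g (cls j x) = cls j (g x).
Proof.
  intro Hg. pose proof (Zser_congruence HL j) as HT. unfold theta.
  apply (qclass_eq_iff op _ HT). apply (G_respects _ g HT Hg).
  apply (qclass_eq_iff op _ HT). exact (qclass_qrep op _ _).
Qed.

Lemma theta_is_f j y z f :
  is_f op y z f -> is_f (qopj j) (cls j y) (cls j z) (theta op e j f).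
Proof.
  intros Hf P. pose proof (Zser_congruence HL j) as HT.
  destruct (qclass_surj op _ P) as [x ->].
  rewrite theta_qclass by (apply gg_gen; exists y, z; exact Hf).
  rewrite !(qop_qclass op _ HT), Hf. reflexivity.
Qed.

Lemma theta_compose j g h : G_of op g -> G_of op h ->
  theta op e j (fun x => g (h x)) = fun P => theta op e j g (theta op e j h P).
Proof.
  intros Hg Hh. extensionality P. destruct (qclass_surj op _ P) as [x ->].
  rewrite (theta_qclass j h x Hh), (theta_qclass j g _ Hg).
  exact (theta_qclass j _ x (gg_comp Hg Hh)).
Qed.

Lemma theta_G j g : G_of op g -> G_of (qopj j) (theta op e j g).
Proof.
  intro Hg.
  induction Hg as [| f [y [z Hf]] | f g [y [z Hf]] Hfg Hgf | f g Hf IHf Hg IHg].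
  - replace (theta op e j (fun x => x)) with (fun P : quot op (Zser op e j) => P);
      [constructor|].
    extensionality P. symmetry. exact (qclass_qrep op _ P).
  - apply gg_gen. exists (cls j y), (cls j z). exact (theta_is_f j y z f Hf).
  - assert (Hfgen : G_of op f) by (apply gg_gen; exists y, z; exact Hf).
    assert (Hggen : G_of op g) by (apply (gg_inv _ f g); [exists y, z|..]; assumption).
    apply (gg_inv _ (theta op e j f)).
    + exists (cls j y), (cls j z). exact (theta_is_f j y z f Hf).
    + intro P. destruct (qclass_surj op _ P) as [x ->].
      rewrite !theta_qclass, Hfg by assumption. reflexivity.
    + intro P. destruct (qclass_surj op _ P) as [x ->].
      rewrite !theta_qclass, Hgf by assumption. reflexivity.
  - rewrite theta_compose by assumption. apply gg_comp; assumption.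
Qed.

Lemma ker_theta_iff j g :
  ker_theta op e j g <-> G_of op g /\ forall x, cls j (g x) = cls j x.
Proof.
  unfold ker_theta. split; intros [Hg H]; split; try exact Hg.
  - intro x. rewrite <- theta_qclass by exact Hg. apply H.
  - intro P. destruct (qclass_surj op _ P) as [x ->]. rewrite theta_qclass by exact Hg.
    apply H.
Qed.

Lemma theta_central_shift j g c x : G_of op g -> central (qopj j) (cls j c) ->
  cls j (g (op c x)) = qopj j (cls j c) (cls j (g x)).
Proof.
  intros Hg Hc. pose proof (Zser_congruence HL j) as HT.
  rewrite <- (theta_qclass j g _ Hg), <- (qop_qclass op _ HT),
    (G_central_shift (quotient_loop j) _ (theta_G j g Hg) _ _ Hc), (theta_qclass j g _ Hg).
  reflexivity.
Qed.

Lemma ker_theta_zero g : ker_theta op e 0 g <-> G_of op g /\ forall x, g x = x.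
Proof.
  rewrite ker_theta_iff.
  assert (cls0 : forall x y, cls 0 x = cls 0 y <-> x = y).
  { intros x y. rewrite (qclass_eq_iff op _ (Zser_congruence HL 0)), (coset_Zser0_iff HL).
    split; intro; symmetry; assumption. }
  split; intros [Hg H]; split; try exact Hg; intro x; apply cls0, H.
Qed.

Lemma ker_theta_mono j g : ker_theta op e j g -> ker_theta op e (S j) g.
Proof.
  rewrite !ker_theta_iff. intros [Hg H]. split; [exact Hg|]. intro x.
  specialize (H x).
  apply (qclass_eq_iff op _ (Zser_congruence HL j)) in H.
  apply (qclass_eq_iff op _ (Zser_congruence HL (S j))).
  destruct H as [t [Ht E]]. exists t. split; [apply (Zser_mono HL); exact Ht|exact E].
Qed.

(** If [Z_n = L] with [n > 0] then [L/Z_{n-1}] consists of central elements,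
    so [G_{L/Z_{n-1}}] is trivial and [ker θ_{n-1} = G_L]. *)
Lemma ker_theta_top n g : 0 < n -> (forall x, Zser op e n x) -> G_of op g ->
  ker_theta op e (n - 1) g.
Proof.
  intros Hn Htop Hg. destruct n as [|m]; [inversion Hn|].
  replace (S m - 1) with m by lia. split; [exact Hg|].
  apply (G_trivial_on_central_loop (quotient_loop m)); [|exact (theta_G m g Hg)].
  intro P. destruct (qclass_surj op _ P) as [x ->].
  apply (Zser_succ_iff HL m x (Zser_congruence HL m)), Htop.
Qed.

Lemma qclass_G_respects j g x y : G_of op g -> cls j x = cls j y -> cls j (g x) = cls j (g y).
Proof. intros Hg H. rewrite <- !theta_qclass, H by exact Hg. reflexivity. Qed.

(** For
    [g ∈ ker θ_{j+1}] it lies in [Z_{j+1}]; its class modulo [Z_j] yields the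
    [b]-th coordinate of the embedding of [ker θ_{j+1}/ker θ_j] into
    [∏_b Z_{j+1}/Z_j]. *)
Definition displacement (g : L -> L) (b : L) : L :=
  proj1_sig (constructive_indefinite_description _ (loop_rdiv HL b (g b))).

Lemma displacement_spec g b : op (displacement g b) b = g b.
Proof. unfold displacement. destruct (constructive_indefinite_description _ _). assumption. Qed.

Lemma displacement_qclass j g b : qopj j (cls j (displacement g b)) (cls j b) = cls j (g b).
Proof. rewrite (qop_qclass op _ (Zser_congruence HL j)), displacement_spec. reflexivity. Qed.

Lemma displacement_in_Z j g b : ker_theta op e (S j) g -> Zser op e (S j) (displacement g b).
Proof.
  rewrite ker_theta_iff. intros [_ H]. specialize (H b). symmetry in H.
  apply (qclass_eq_iff op _ (Zser_congruence HL (S j))) in H. destruct H as [t [Ht E]].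
  replace (displacement g b) with t; [exact Ht|].
  apply (loop_rcancel HL _ _ b). rewrite displacement_spec. symmetry. exact E.
Qed.

Lemma displacement_central j g b : ker_theta op e (S j) g ->
  central (qopj j) (cls j (displacement g b)).
Proof.
  intro Hg. apply (Zser_succ_iff HL j _ (Zser_congruence HL j)), displacement_in_Z, Hg.
Qed.

Lemma displacement_compose j g h b : ker_theta op e (S j) g -> ker_theta op e (S j) h ->
  cls j (displacement (fun x => g (h x)) b) =
  qopj j (cls j (displacement g b)) (cls j (displacement h b)).
Proof.
  intros Hg Hh.
  pose proof (displacement_central j g b Hg) as Cg.
  pose proof (displacement_central j h b Hh) as Ch.
  apply (loop_rcancel (quotient_loop j) _ _ (cls j b)).
  rewrite (displacement_qclass j (fun x => g (h x)) b), <- (displacement_spec h b).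
  rewrite (theta_central_shift j g _ _ (proj1 Hg) Ch), <- (displacement_qclass j g b).
  rewrite <- (central_assoc_l Ch), (central_comm Ch (cls j (displacement g b))).
  reflexivity.
Qed.

Lemma displacement_eq_iff j g h b :
  cls j (displacement g b) = cls j (displacement h b) <-> cls j (g b) = cls j (h b).
Proof.
  rewrite <- (displacement_qclass j g b), <- (displacement_qclass j h b). split; intro H.
  - rewrite H. reflexivity.
  - exact (loop_rcancel (quotient_loop j) _ _ _ H).
Qed.

Lemma kernel_quotient_embeds j :
  exists (B : Type) (phi : (L -> L) -> B -> quot op (Zser op e j)),
    (forall g b, ker_theta op e (S j) g ->
       exists x, Zser op e (S j) x /\ phi g b = cls j x) /\
    (forall g h, ker_theta op e (S j) g -> ker_theta op e (S j) h ->
       forall b, phi (fun x => g (h x)) b = qopj j (phi g b) (phi h b)) /\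
    (forall g h, ker_theta op e (S j) g -> ker_theta op e (S j) h ->
       ((forall b, phi g b = phi h b) <->
        exists k, ker_theta op e j k /\ forall x, h x = g (k x))).
Proof.
  exists L, (fun g b => cls j (displacement g b)). split; [|split].
  - intros g b Hg. exists (displacement g b). split; [exact (displacement_in_Z j g b Hg)|].
    reflexivity.
  - intros g h Hg Hh b. exact (displacement_compose j g h b Hg Hh).
  - intros g h [HGg _] [HGh _]. setoid_rewrite displacement_eq_iff. split.
    + intro Hgh. destruct (G_inverse HL g HGg) as [g' [HGg' [Hgg' Hg'g]]].
      exists (fun x => g' (h x)). split.
      * apply ker_theta_iff. split; [apply gg_comp; assumption|]. intro x.
        rewrite <- (Hg'g x) at 2. symmetry. exact (qclass_G_respects j g' _ _ HGg' (Hgh x)).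
      * intro x. rewrite Hgg'. reflexivity.
    + intros [k [Hk Hhk]] b. apply ker_theta_iff in Hk. rewrite Hhk.
      symmetry. exact (qclass_G_respects j g _ _ HGg (proj2 Hk b)).
Qed.
End Theta.

Theorem mainTheorem14 (S : Type) (op : S -> S -> S) (e : S)
  (HS : is_right_loop op e) (n : nat) (Hn : 0 < n)
  (HZn : forall x, Zser op e n x) :
  (* ker theta_0 = {1} *)
  (forall g, ker_theta op e 0 g <-> (G_of op g /\ forall x, g x = x)) /\
  (* ker theta_j <= ker theta_(j+1) *)
  (forall j, j + 1 <= n - 1 -> forall g, ker_theta op e j g -> ker_theta op e (j + 1) g) /\
  (* ker theta_(n-1) = G_S *)
  (forall g, ker_theta op e (n - 1) g <-> G_of op g) /\
  (* ker theta_(j+1) / ker theta_j embeds in prod_B Z_(j+1)/Z_j *)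
  (forall j, j + 1 <= n - 1 ->
     exists (B : Type) (phi : (S -> S) -> B -> quot op (Zser op e j)),
       (forall g b, ker_theta op e (j + 1) g ->
          exists x, Zser op e (j + 1) x /\ phi g b = qclass op (Zser op e j) x) /\
       (forall g h, ker_theta op e (j + 1) g -> ker_theta op e (j + 1) h ->
          forall b, phi (fun x => g (h x)) b = qop op (Zser op e j) (phi g b) (phi h b)) /\
       (forall g h, ker_theta op e (j + 1) g -> ker_theta op e (j + 1) h ->
          ((forall b, phi g b = phi h b) <->
           exists k, ker_theta op e j k /\ forall x, h x = g (k x)))).
Proof.
  split; [|split; [|split]].
  - exact (ker_theta_zero HS).
  - intros j _ g. rewrite Nat.add_1_r. exact (ker_theta_mono HS j g).
  - intro g. split; [intros [Hg _]; exact Hg|]. exact (ker_theta_top HS n g Hn HZn).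
  - intros j _. rewrite Nat.add_1_r. exact (kernel_quotient_embeds HS j).
Qed.
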